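(* Let $L$ be a convexity lattice. If $L$ is algebraic, or if $L$ is order-scattered, then $L$ is spatial.
   Context: A convexity lattice is a lattice isomorphic to $Cl(X,\varphi)$, the lattice of closed sets (ordered by inclusion) of a convex geometry $(X,\varphi)$, i.e. a closure operator $\varphi$ on a non-empty set $X$ with $\varphi(\emptyset)=\emptyset$ satisfying: for closed $A$ and $x\neq y$, $x\in\varphi(A\cup\{y\})$ and $x\notin A$ imply $y\notin\varphi(A\cup\{x\})$. A poset is order-scattered if it contains no copy of $\mathbb{Q}$. A complete lattice is spatial if every element is a join of completely join-irreducible elements (elements $y$ with a lower cover $y_*$ such that $z<y$ implies $z\leq y_*$). *)

From mathcomp Require Import all_boot all_order all_algebra.
From Stdlib Require Import List.

Set Implicit Arguments.
Unset Strict Implicit.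
Unset Printing Implicit Defensive.

Section ConvexGeometry.
Variable X : Type.

Definition sset (A B : X -> Prop) : Prop := forall x, A x -> B x.
Definition seq_set (A B : X -> Prop) : Prop := forall x, A x <-> B x.

Definition closure_operator (phi : (X -> Prop) -> (X -> Prop)) : Prop :=
  [/\ (forall A, sset A (phi A)),
      (forall A B, sset A B -> sset (phi A) (phi B)) &
      (forall A, seq_set (phi (phi A)) (phi A))].

Definition is_closed (phi : (X -> Prop) -> (X -> Prop)) (A : X -> Prop) : Prop :=
  seq_set (phi A) A.

Definition convex_geometry (phi : (X -> Prop) -> (X -> Prop)) : Prop :=
  [/\ inhabited X,
      closure_operator phi,
      (forall x, ~ phi (fun _ => False) x) &
      (forall (A : X -> Prop) (x y : X), is_closed phi A -> x <> y ->
         phi (fun z => A z \/ z = y) x -> ~ A x ->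
         ~ phi (fun z => A z \/ z = x) y)].
End ConvexGeometry.

Section OrderNotions.
Variables (T : Type) (le : T -> T -> Prop).

Definition lt (a b : T) : Prop := le a b /\ a <> b.

Definition is_lub (S : T -> Prop) (s : T) : Prop :=
  (forall x, S x -> le x s) /\ (forall u, (forall x, S x -> le x u) -> le s u).

Definition finite_set (F : T -> Prop) : Prop :=
  exists l : list T, forall x, F x <-> In x l.

Definition compact (a : T) : Prop :=
  forall (S : T -> Prop) (s : T), is_lub S s -> le a s ->
    exists (F : T -> Prop) (t : T),
      finite_set F /\ (forall x, F x -> S x) /\ is_lub F t /\ le a t.

Definition complete_lattice : Prop :=
  forall S : T -> Prop, exists s, is_lub S s.

Definition algebraic : Prop :=
  complete_lattice /\
  forall x, exists S : T -> Prop, (forall c, S c -> compact c) /\ is_lub S x.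

Definition order_scattered : Prop :=
  ~ exists g : rat -> T, forall p q : rat, (p <= q)%R <-> le (g p) (g q).

Definition completely_join_irreducible (y : T) : Prop :=
  exists ys : T,
    lt ys y /\ (forall z, le ys z -> le z y -> z = ys \/ z = y) /\
    (forall z, lt z y -> le z ys).

Definition spatial : Prop :=
  complete_lattice /\
  forall x, exists S : T -> Prop,
    (forall c, S c -> completely_join_irreducible c) /\ is_lub S x.

Definition convexity_lattice : Prop :=
  exists (X : Type) (phi : (X -> Prop) -> (X -> Prop)) (f : T -> (X -> Prop)),
    [/\ convex_geometry phi,
        (forall a, is_closed phi (f a)),
        (forall C, is_closed phi C -> exists a, seq_set (f a) C),
        (forall a b, seq_set (f a) (f b) -> a = b) &
        (forall a b, le a b <-> sset (f a) (f b))].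
End OrderNotions.

(* In Cl(X, phi) call y extreme when the punctured hull phi{y} \ {y} is
   closed; phi{y} is then completely join-irreducible, so the closure b of the
   extreme points of a lies below every upper bound of the completely
   join-irreducible elements below a, and it suffices to show b = a.  If b < a,
   anti-exchange makes the interval [b, a] dense: for closed p < q in it, a
   non-extreme y in q \ p has some z in phi{y} \ {y} outside p, and
   phi(p + z) lies strictly between p and q.  A dense nontrivial interval of a
   complete lattice has no covering pair, contradicting algebraicity (Zorn plus
   compactness), and contains a copy of Q, built from iterated midpoints
   indexed by dyadic rationals, contradicting order-scatteredness. *)
From Pilot Require Import Defs.
From mathcomp Require Import all_boot all_order all_algebra.
From mathcomp Require Import zify lra.
From mathcomp Require boolp classical_sets.
From Stdlib Require Import Classical ClassicalEpsilon.
Import Order.TTheory GRing.Theory Num.Theory.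

Set Implicit Arguments.
Unset Strict Implicit.
Unset Printing Implicit Defensive.

Section DyadicRationals.
Local Open Scope ring_scope.

Definition dyadic (n k : nat) : rat := k%:R / 2 ^+ n.

Lemma dyadic_le n k m l :
  dyadic n k <= dyadic m l -> (k * 2 ^ m <= l * 2 ^ n)%N.
Proof.
rewrite /dyadic ler_pdivrMr ?exprn_gt0 // mulrAC ler_pdivlMr ?exprn_gt0 //.
by rewrite -!natrX -!natrM ler_nat.
Qed.

Lemma dyadic_lt n k m l :
  dyadic n k < dyadic m l -> (k * 2 ^ m < l * 2 ^ n)%N.
Proof.
rewrite /dyadic ltr_pdivrMr ?exprn_gt0 // mulrAC ltr_pdivlMr ?exprn_gt0 //.
by rewrite -!natrX -!natrM ltr_nat.
Qed.

Lemma dyadic_full n : dyadic n (2 ^ n) = 1.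
Proof. by rewrite /dyadic natrX divff // expf_neq0. Qed.

Lemma dyadic_consecutive_between (a b : rat) : 0 < a -> a < b -> b < 1 ->
  exists n k, [/\ a < dyadic n k, dyadic n k.+1 <= b & (k.+1 <= 2 ^ n)%N].
Proof.
move=> a_gt0 ab b_lt1.
have [n step_lt] : exists n, 2 / 2 ^+ n < b - a.
  exists (Num.Def.archi_bound (2 / (b - a))).
  rewrite ltr_pdivrMr ?exprn_gt0 // mulrC -ltr_pdivrMr ?subr_gt0 //.
  exact: upper_nthrootP.
have ex_above : exists k, a < dyadic n k.
  by exists (2 ^ n)%N; rewrite dyadic_full; apply: lt_trans ab b_lt1.
case: (ex_minnP ex_above) => -[|k] a_lt min_k.
  by move: a_lt; rewrite /dyadic mul0r => /(lt_trans a_gt0); rewrite ltxx.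
have k_le_a : dyadic n k <= a.
  by rewrite leNgt; apply/negP => /min_k; rewrite ltnn.
have k2_lt_b : dyadic n k.+2 < b.
  have -> : dyadic n k.+2 = dyadic n k + 2 / 2 ^+ n.
    by rewrite /dyadic -addn2 natrD mulrDl.
  lra.
exists n, k.+1; split => //; first exact: ltW.
have : dyadic n k.+2 < dyadic n (2 ^ n).
  by rewrite dyadic_full; apply: lt_trans k2_lt_b b_lt1.
by move/dyadic_lt; rewrite ltn_pmul2r ?expn_gt0 // => /ltnW.
Qed.

Definition squash (r : rat) : rat := (1 + r / (1 + `|r|)) / 2.

Lemma squash_bounds r : 0 < squash r < 1.
Proof.
have den_gt0 : 0 < 1 + `|r| by rewrite ltr_pwDl.
have h1 : r / (1 + `|r|) < 1.
  rewrite ltr_pdivrMr // mul1r; apply: le_lt_trans (ler_norm r) _; lra.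
have h2 : -1 < r / (1 + `|r|).
  rewrite ltr_pdivlMr // mulN1r.
  have : - r <= `|r| by rewrite -normrN ler_norm.
  lra.
apply/andP; rewrite /squash; split; lra.
Qed.

Lemma squash_lt p q : p < q -> squash p < squash q.
Proof.
move=> pq.
have hp : 0 < 1 + `|p| by rewrite ltr_pwDl.
have hq : 0 < 1 + `|q| by rewrite ltr_pwDl.
suff : p / (1 + `|p|) < q / (1 + `|q|) by rewrite /squash; lra.
rewrite ltr_pdivrMr // mulrAC ltr_pdivlMr //.
case: (lerP 0 p) => p0; case: (lerP 0 q) => q0.
- rewrite !ger0_norm //; nra.
- lra.
- rewrite (ger0_norm q0) (ltr0_norm p0); nra.
- rewrite (ltr0_norm q0) (ltr0_norm p0); nra.
Qed.

End DyadicRationals.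

Section RelationalOrder.
Variables (T : Type) (le : T -> T -> Prop).
Local Notation lt := (Defs.lt le).
Hypotheses (refl : forall a, le a a)
  (trans : forall a b c, le a b -> le b c -> le a c)
  (anti : forall a b, le a b -> le b a -> a = b).

Lemma rel_lt_le_trans a b c : lt a b -> le b c -> lt a c.
Proof.
move=> [ab a_neq_b] bc; split; first exact: trans ab bc.
by move=> ac; subst c; apply: a_neq_b; apply: anti.
Qed.

Lemma rel_le_lt_trans a b c : le a b -> lt b c -> lt a c.
Proof.
move=> ab [bc b_neq_c]; split; first exact: trans ab bc.
by move=> ac; subst c; apply: b_neq_c; apply: anti.
Qed.

Section DenseInterval.
Variables lo hi : T.
Hypothesis lo_lt_hi : lt lo hi.
Hypothesis dense : forall p q, le lo p -> le q hi -> lt p q ->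
  exists m, lt p m /\ lt m q.

Definition mid (p q : T) : T := epsilon (inhabits p) (fun m => lt p m /\ lt m q).

Lemma mid_between p q : le lo p -> le q hi -> lt p q ->
  lt p (mid p q) /\ lt (mid p q) q.
Proof.
move=> lo_p q_hi pq.
exact: (epsilon_spec _ (fun m => lt p m /\ lt m q) (dense lo_p q_hi pq)).
Qed.

(* [dyad n k] is the point of the interval at the dyadic position k / 2^n:
   level n + 1 keeps the points of level n at even positions and inserts
   midpoints at odd ones. *)
Fixpoint dyad (n k : nat) : T :=
  match n with
  | 0 => if k == 0 then lo else hi
  | n.+1 => if odd k then mid (dyad n k./2) (dyad n k./2.+1) else dyad n k./2
  end.

Lemma dyad_double n j : dyad n.+1 j.*2 = dyad n j.
Proof. by rewrite /= odd_double doubleK. Qed.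

Lemma dyad_double_succ n j : dyad n.+1 j.*2.+1 = mid (dyad n j) (dyad n j.+1).
Proof. by rewrite /= odd_double /= uphalf_double. Qed.

Lemma dyad_lift n m k : dyad (n + m) (k * 2 ^ m) = dyad n k.
Proof.
elim: m => [|m IH]; first by rewrite addn0 expn0 muln1.
by rewrite addnS expnS mulnCA mul2n dyad_double.
Qed.

Lemma dyad_step n k : k < 2 ^ n ->
  [/\ le lo (dyad n k), le (dyad n k.+1) hi & lt (dyad n k) (dyad n k.+1)].
Proof.
elim: n k => [|n IH] k.
  by rewrite expn0 ltnS leqn0 => /eqP->; split.
rewrite -[k]odd_double_half; move: (odd k) (k./2) => odd_k j k_lt.
have j_lt : j < 2 ^ n by move: k_lt; rewrite expnS -!muln2; case: odd_k => /=; lia.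
have [lo_j j_hi jj] := IH j j_lt.
have [j_mid mid_j] := mid_between lo_j j_hi jj.
case: odd_k {k_lt}.
- rewrite add1n dyad_double_succ -doubleS dyad_double.
  by split=> //; apply: trans lo_j j_mid.1.
- rewrite add0n dyad_double dyad_double_succ.
  by split=> //; apply: trans mid_j.1 j_hi.
Qed.

Lemma dyad_lt n k l : l <= 2 ^ n -> k < l -> lt (dyad n k) (dyad n l).
Proof.
elim: l => // l IH l_lt; have [_ _ l_succ] := dyad_step l_lt.
rewrite ltnS leq_eqVlt => /orP[/eqP->|kl] //.
exact: rel_lt_le_trans (IH (ltnW l_lt) kl) l_succ.1.
Qed.

Lemma dyad_le n k l : l <= 2 ^ n -> k <= l -> le (dyad n k) (dyad n l).
Proof.
move=> l_le; rewrite leq_eqVlt => /orP[/eqP->|kl]; first exact: refl.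
exact: (dyad_lt l_le kl).1.
Qed.

Lemma dyad_common_level n k m l :
  dyad n k = dyad (n + m) (k * 2 ^ m) /\ dyad m l = dyad (n + m) (l * 2 ^ n).
Proof. by rewrite dyad_lift addnC dyad_lift. Qed.

Lemma dyad_le_dyadic n k m l : l <= 2 ^ m ->
  (dyadic n k <= dyadic m l)%R -> le (dyad n k) (dyad m l).
Proof.
move=> l_le /dyadic_le kl; have [-> ->] := dyad_common_level n k m l.
by apply: dyad_le kl; rewrite addnC expnD leq_mul.
Qed.

Lemma dyad_lt_dyadic n k m l : l <= 2 ^ m ->
  (dyadic n k < dyadic m l)%R -> lt (dyad n k) (dyad m l).
Proof.
move=> l_le /dyadic_lt kl; have [-> ->] := dyad_common_level n k m l.
by apply: dyad_lt kl; rewrite addnC expnD leq_mul.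
Qed.

Lemma dense_interval_embeds_rat : complete_lattice le ->
  exists g : rat -> T, forall p q, (p <= q)%R <-> le (g p) (g q).
Proof.
move=> cl.
pose below r x := exists n k,
  [/\ k <= 2 ^ n, (dyadic n k <= squash r)%R & x = dyad n k].
have [g g_lub] := ClassicalEpsilon.choice _ (fun r => cl (below r)).
have g_lt p q : (p < q)%R -> lt (g p) (g q).
  move=> pq; have /andP[p_gt0 p_lt1] := squash_bounds p.
  have /andP[q_gt0 q_lt1] := squash_bounds q.
  have [n [k [p_lt k_le k_lt]]] :=
    dyadic_consecutive_between p_gt0 (squash_lt pq) q_lt1.
  have gp_le : le (g p) (dyad n k).
    apply: (g_lub p).2 => _ [m [l [l_le lp ->]]].
    by apply: dyad_le_dyadic (ltnW k_lt) _; apply/ltW/(le_lt_trans lp).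
  have gq_ge : le (dyad n k.+1) (g q) by apply: (g_lub q).1; exists n, k.+1.
  apply: rel_le_lt_trans gp_le (rel_lt_le_trans _ gq_ge).
  exact: dyad_lt k_lt (ltnSn k).
exists g => p q; split.
  by rewrite le_eqVlt => /orP[/eqP->|/g_lt[]].
move=> gpq; rewrite leNgt; apply/negP => /g_lt[gqp]; apply; exact: anti.
Qed.

End DenseInterval.

Lemma chain_list_bounded (C : T -> Prop) (b : T) (l : list T) : C b ->
  (forall x y, C x -> C y -> le x y \/ le y x) ->
  (forall x, List.In x l -> C x) ->
  exists2 m, C m & forall x, List.In x l -> le x m.
Proof.
move=> Cb C_total; elim: l => [|x l IH] l_C; first by exists b.
have [m Cm l_le_m] : exists2 m, C m & forall y, List.In y l -> le y m.
  by apply: IH => y l_y; apply: l_C; right.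
have Cx : C x by apply: l_C; left.
case: (C_total x m Cx Cm) => [xm|mx].
- by exists m => // y [<-|l_y]; last exact: l_le_m.
- by exists x => // y [<-|l_y]; [exact: refl | exact: trans (l_le_m _ l_y) mx].
Qed.

Lemma maximal_avoiding_compact c b e :
  complete_lattice le -> compact le c -> le b e -> ~ le c b ->
  exists p, [/\ le b p, le p e, ~ le c p &
    forall z, le p z -> le z e -> ~ le c z -> z = p].
Proof.
move=> cl c_compact be cb.
pose P x := [/\ le b x, le x e & ~ le c x].
pose R (u v : {x | P x}) := boolp.asbool (le (proj1_sig u) (proj1_sig v)).
have Pb : P b by split.
have [[p Pp] p_max] : exists t, classical_sets.premaximal R t.
  apply: (classical_sets.ZL_preorder (exist _ b Pb)).
  - by move=> u; apply/boolp.asboolP.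
  - move=> u v w /boolp.asboolP uv /boolp.asboolP vw.
    by apply/boolp.asboolP; apply: trans uv vw.
  move=> A A_total.
  (* b is adjoined so that the join of an empty chain still lies above b. *)
  pose C x := x = b \/ exists2 u, A u & proj1_sig u = x.
  have C_P x : C x -> P x by case=> [->|[[u Pu] _ /= <-]].
  have C_total x y : C x -> C y -> le x y \/ le y x.
    have C_ge_b z : C z -> le b z by move=> /C_P[].
    move=> [->|[u Au <-]]; first by left; apply: C_ge_b.
    move=> [->|[v Av <-]]; first by right; apply: C_ge_b; right; exists u.
    by case: (A_total _ _ Au Av) => /boolp.asboolP; [left|right].
  have [s s_lub] := cl C.
  have Ps : P s.
    split; first by apply: s_lub.1; left.
      by apply: s_lub.2 => x /C_P[].
    move=> /(c_compact _ _ s_lub) [F [t [[l Fl] [F_C [t_lub ct]]]]].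
    have [m Cm l_le_m] := chain_list_bounded (or_introl erefl) C_total
      (fun x l_x => F_C x ((Fl x).2 l_x)).
    have [_ _ cm] := C_P _ Cm; apply: cm; apply: trans ct _.
    by apply: t_lub.2 => x /Fl; apply: l_le_m.
  by exists (exist _ s Ps) => u Au; apply/boolp.asboolP; apply: s_lub.1; right; exists u.
have [b_p p_e cp] := Pp; exists p; split=> // z pz ze cz.
have Pz : P z by split=> //; apply: trans b_p pz.
apply: anti; last exact: pz.
have := p_max (exist _ z Pz) (introT (boolp.asboolP _) pz).
by move/boolp.asboolP.
Qed.

Lemma algebraic_cover b e : algebraic le -> le b e -> ~ le e b ->
  exists p q, [/\ le b p, le q e, lt p q &
    forall z, le p z -> le z q -> z = p \/ z = q].
Proof.
move=> [cl e_join] be eb.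
have [S [S_compact S_lub]] := e_join e.
have [c Sc cb] : exists2 c, S c & ~ le c b.
  apply: NNPP => none; apply: eb; apply: S_lub.2 => x Sx.
  by apply: NNPP => xb; apply: none; exists x.
have [p [b_p p_e cp p_max]] :=
  maximal_avoiding_compact cl (S_compact c Sc) be cb.
have [q q_lub] := cl (fun x => x = p \/ x = c).
have pq : le p q by apply: q_lub.1; left.
have cq : le c q by apply: q_lub.1; right.
exists p, q; split=> //.
- by apply: q_lub.2 => x [->|->] //; apply: S_lub.1.
- by split=> // p_eq_q; apply: cp; rewrite p_eq_q.
move=> z pz zq; case: (classic (le c z)) => cz.
  by right; apply: anti zq _; apply: q_lub.2 => x [->|->].
left; apply: p_max => //; apply: trans zq _.
by apply: q_lub.2 => x [->|->] //; apply: S_lub.1.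
Qed.

Lemma dense_interval_absurd lo hi :
  algebraic le \/ order_scattered le -> complete_lattice le -> lt lo hi ->
  (forall p q, le lo p -> le q hi -> lt p q -> exists m, lt p m /\ lt m q) ->
  False.
Proof.
move=> [alg|scattered] cl lo_hi dense.
- have [lo_le_hi lo_neq_hi] := lo_hi.
  have hi_lo : ~ le hi lo by move=> hl; apply: lo_neq_hi; apply: anti.
  have [p [q [lo_p q_hi pq cover]]] := algebraic_cover alg lo_le_hi hi_lo.
  have [m [pm mq]] := dense p q lo_p q_hi pq.
  by case: (cover m pm.1 mq.1) => m_eq; subst m; [case: pm | case: mq].
- by apply: scattered; apply: dense_interval_embeds_rat lo_hi dense cl.
Qed.

End RelationalOrder.

Section ConvexGeometry.
Variables (X : Type) (phi : (X -> Prop) -> X -> Prop).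
Hypothesis phi_cg : convex_geometry phi.

Lemma closure_ext A : sset A (phi A).
Proof. by case: phi_cg => _ []. Qed.

Lemma closure_mono A B : sset A B -> sset (phi A) (phi B).
Proof. by case: phi_cg => _ [_ mono _] _ _; apply: mono. Qed.

Lemma closure_closed A : is_closed phi (phi A).
Proof. by case: phi_cg => _ [_ _ idem] _ _; apply: idem. Qed.

Lemma closure_least A C : sset A C -> is_closed phi C -> sset (phi A) C.
Proof. by move=> AC C_closed x /(closure_mono AC) /C_closed. Qed.

Definition punctured_hull (y : X) : X -> Prop :=
  fun z => phi (fun w => w = y) z /\ z <> y.

Lemma punctured_hull_nonclosed y :
  ~ is_closed phi (punctured_hull y) -> phi (punctured_hull y) y.
Proof.
move=> not_closed; apply: NNPP => not_y; apply: not_closed => z.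
split; last exact: closure_ext.
move=> hz; split; last by move=> zy; subst z; apply: not_y.
apply/closure_closed; apply: closure_mono hz; by move=> w [].
Qed.

Lemma closed_strictly_between P y : is_closed phi P -> ~ P y ->
  ~ is_closed phi (punctured_hull y) ->
  exists M, [/\ is_closed phi M, sset P M,
    sset M (phi (fun z => P z \/ z = y)), (exists z, M z /\ ~ P z) & ~ M y].
Proof.
move=> P_closed Py not_closed.
pose Py_hull := phi (fun z => P z \/ z = y).
have [z [y_z Pz zy]] : exists z, [/\ Py_hull z, ~ P z & z <> y].
  apply: NNPP => none.
  have hull_P : sset (punctured_hull y) P.
    move=> z [y_z zy]; apply: NNPP => Pz; apply: none; exists z; split=> //.
    by apply: closure_mono y_z => w ->; right.
  exact: Py (closure_least hull_P P_closed (punctured_hull_nonclosed not_closed)).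
exists (phi (fun w => P w \/ w = z)); split.
- exact: closure_closed.
- by move=> w Pw; apply: closure_ext; left.
- apply: closure_least (@closure_closed _) => w [Pw|->] //.
  by apply: closure_ext; left.
- by exists z; split=> //; apply: closure_ext; right.
- by case: phi_cg => _ _ _ anti_exchange; apply: anti_exchange.
Qed.

End ConvexGeometry.

Section ConvexityLattice.
Variables (T : Type) (le : T -> T -> Prop).
Local Notation lt := (Defs.lt le).
Variables (X : Type) (phi : (X -> Prop) -> X -> Prop) (f : T -> X -> Prop).
Hypotheses (phi_cg : convex_geometry phi)
  (f_closed : forall a, is_closed phi (f a))
  (f_onto : forall C, is_closed phi C -> exists a, seq_set (f a) C)
  (f_inj : forall a b, seq_set (f a) (f b) -> a = b)
  (leE : forall a b, le a b <-> sset (f a) (f b)).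

Lemma lattice_refl a : le a a.
Proof. exact/leE. Qed.

Lemma lattice_trans a b c : le a b -> le b c -> le a c.
Proof. by move=> /leE ab /leE bc; apply/leE => x /ab /bc. Qed.

Lemma lattice_anti a b : le a b -> le b a -> a = b.
Proof. by move=> /leE ab /leE ba; apply: f_inj => x; split; [apply: ab | apply: ba]. Qed.

Lemma lattice_complete : complete_lattice le.
Proof.
move=> S.
have [s fs] := f_onto (closure_closed phi_cg (fun x => exists2 a, S a & f a x)).
exists s; split.
- move=> a Sa; apply/leE => x fax; apply/fs; apply: closure_ext => //.
  by exists a.
- move=> u u_ub; apply/leE => x /fs; apply: closure_least => // y [a Sa].
  by move/leE: (u_ub a Sa); apply.
Qed.

Lemma lt_witness p q : lt p q -> exists y, f q y /\ ~ f p y.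
Proof.
move=> [pq p_neq_q]; apply: NNPP => none; apply: p_neq_q.
apply: lattice_anti pq _; apply/leE => y qy.
by apply: NNPP => py; apply: none; exists y.
Qed.

Lemma cji_of_extreme_point c y : is_closed phi (punctured_hull phi y) ->
  seq_set (f c) (phi (fun w => w = y)) -> completely_join_irreducible le c.
Proof.
move=> hull_closed fc.
have [c' fc'] := f_onto hull_closed.
have c_y : f c y by apply/fc; apply: closure_ext.
have le_c' z : le z c -> ~ f z y -> le z c'.
  move=> /leE zc zy; apply/leE => w zw; apply/fc'; split.
  - by apply/fc; apply: zc.
  - by move=> wy; subst w.
have eq_c z : le z c -> f z y -> z = c.
  move=> zc zy; apply: lattice_anti zc _; apply/leE => w /fc.
  by apply: closure_least => // v ->.
exists c'; split; [split|split].
- by apply/leE => w /fc' [/fc].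
- by move=> c'c; subst c'; have [] := (fc' y).1 c_y.
- move=> z c'z zc; case: (classic (f z y)) => zy; first by right; apply: eq_c.
  by left; apply: lattice_anti (le_c' z zc zy) c'z.
- move=> z [zc z_neq_c]; apply: le_c' => // zy; exact: z_neq_c (eq_c z zc zy).
Qed.

Definition extreme_points (a : T) : X -> Prop :=
  fun y => f a y /\ is_closed phi (punctured_hull phi y).

Lemma interval_dense a b p q : seq_set (f b) (phi (extreme_points a)) ->
  le b p -> le q a -> lt p q -> exists m, lt p m /\ lt m q.
Proof.
move=> fb /leE bp /leE qa pq.
have [y [qy py]] := lt_witness pq.
have not_hull : ~ is_closed phi (punctured_hull phi y).
  move=> hull_closed; apply: py; apply/bp/fb; apply: closure_ext => //.
  by split=> //; apply: qa.
have [M [M_closed pM M_le [z [Mz pz]] My]] :=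
  closed_strictly_between phi_cg (f_closed p) py not_hull.
have [m fm] := f_onto M_closed.
have pm : le p m by apply/leE => w /pM /fm.
have mq : le m q.
  have /leE pq_sub := pq.1.
  by apply/leE => w /fm /M_le; apply: closure_least => // v [/pq_sub|->].
exists m; split; split=> // m_eq; subst m.
- by apply: pz; apply/fm.
- by apply: My; apply/fm.
Qed.

Lemma lub_cji_below a : algebraic le \/ order_scattered le ->
  is_lub le (fun c => le c a /\ completely_join_irreducible le c) a.
Proof.
move=> alg_or_scattered; split=> [c [] //|u u_ub].
have [b fb] := f_onto (closure_closed phi_cg (extreme_points a)).
have ba : le b a by apply/leE => w /fb; apply: closure_least => // v [].
have bu : le b u.
  apply/leE => w /fb; apply: closure_least => // y [ay hull_closed].
  have [c fc] := f_onto (closure_closed phi_cg (fun w => w = y)).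
  have ca : le c a by apply/leE => v /fc; apply: closure_least => // _ ->.
  have /leE := u_ub c (conj ca (cji_of_extreme_point hull_closed fc)).
  by apply; apply/fc; apply: closure_ext.
apply: lattice_trans bu; apply: NNPP => ab.
apply: (dense_interval_absurd lattice_refl lattice_trans lattice_anti
  alg_or_scattered lattice_complete (lo := b) (hi := a)).
- by split=> // b_eq_a; subst b; apply: ab; apply: lattice_refl.
- by move=> p q; apply: interval_dense.
Qed.

End ConvexityLattice.

Theorem corollary3p2 (T : Type) (le : T -> T -> Prop) :
  convexity_lattice le ->
  (algebraic le \/ order_scattered le) ->
  spatial le.
Proof.
move=> [X [phi [f [phi_cg f_closed f_onto f_inj leE]]]] alg_or_scattered.
split; first exact: lattice_complete f_onto leE.
move=> a; exists (fun c => le c a /\ completely_join_irreducible le c).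
split; first by move=> c [].
exact: lub_cji_below phi_cg f_closed f_onto f_inj leE a alg_or_scattered.
Qed.
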